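(* Let $(G,*,\le)$ be a totally ordered commutative semigroup, let $n\ge 1$, and let $a_1,a_2,\ldots,a_{2n}\in G$ (not necessarily distinct) with $a_1\le a_2\le\cdots\le a_{2n}$. Let $N\in G$. Suppose there are indices $i_1,j_1,\ldots,i_n,j_n$ with $\{i_1,j_1,\ldots,i_n,j_n\}=\{1,2,\ldots,2n\}$ (so these $2n$ indices are pairwise distinct and each of $1,\ldots,2n$ is used exactly once) such that $$a_{i_k}*a_{j_k}>N\quad\text{for all }k=1,\ldots,n.$$ Then $$a_k*a_{2n+1-k}>N\quad\text{for all }k=1,\ldots,n,$$ i.e. $a_1*a_{2n}>N$, $a_2*a_{2n-1}>N$, $\ldots$, $a_n*a_{n+1}>N$.
   Context: A totally ordered commutative semigroup is a triple $(G,*,\le)$ where $(G,* )$ is a commutative semigroup (an associative, commutative binary operation $*$ on a set $G$) and $\le$ is a total order on $G$ such that for all $\alpha,\beta,\gamma,\delta\in G$: if $\alpha\le\beta$ and $\gamma\le\delta$ then $\alpha*\gamma\le\beta*\delta$. Here $x>y$ means $y\le x$ and $x\ne y$. *)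

From Stdlib Require Import Arith Lia.

Definition TOCS (G : Type) (op : G -> G -> G) (le : G -> G -> Prop) : Prop :=
  (forall x y z, op x (op y z) = op (op x y) z) /\
  (forall x y, op x y = op y x) /\
  (forall x, le x x) /\
  (forall x y, le x y -> le y x -> x = y) /\
  (forall x y z, le x y -> le y z -> le x z) /\
  (forall x y, le x y \/ le y x) /\
  (forall a b c d, le a b -> le c d -> le (op a c) (op b d)).

Definition gt {G : Type} (le : G -> G -> Prop) (x y : G) : Prop :=
  le y x /\ x <> y.

From Stdlib Require Import Arith Lia Classical.

(* Fix k <= n and put X := 2n+1-k, so k <= X.  Give each index m
   the weight  w m = [m <= X] + [m <= k];  the total weight of 1..2n is
   X + k = 2n+1.  Since the n pairs (i t, j t) cover every index, the total
   weight is at most the sum of the weights of the pairs (double counting),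
   so some pair has weight >= 3: both its indices are <= X and one is <= k.
   As a is sorted and the semigroup order is compatible with *, that pair's
   product is below a_k * a_X, and it is > N by hypothesis. *)

Fixpoint sum_to (f : nat -> nat) (n : nat) : nat :=
  match n with 0 => 0 | S p => sum_to f p + f (S p) end.

Lemma sum_to_le (f g : nat -> nat) (n : nat) :
  (forall m, 1 <= m <= n -> f m <= g m) -> sum_to f n <= sum_to g n.
Proof.
  induction n as [|n IH]; simpl; intros Hfg; [lia|].
  pose proof (IH (fun m Hm => Hfg m ltac:(lia))).
  pose proof (Hfg (S n) ltac:(lia)). lia.
Qed.

Lemma sum_to_add (f g : nat -> nat) (n : nat) :
  sum_to (fun m => f m + g m) n = sum_to f n + sum_to g n.
Proof. induction n; simpl; lia. Qed.

Lemma sum_to_const (c n : nat) : sum_to (fun _ => c) n = c * n.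
Proof. induction n; simpl; lia. Qed.

Lemma sum_to_swap (F : nat -> nat -> nat) (p q : nat) :
  sum_to (fun m => sum_to (F m) q) p = sum_to (fun t => sum_to (fun m => F m t) p) q.
Proof.
  induction p as [|p IH]; simpl.
  - symmetry. induction q; simpl; lia.
  - rewrite IH, <- sum_to_add. reflexivity.
Qed.

Lemma sum_to_term_le (f : nat -> nat) (n t : nat) :
  1 <= t <= n -> f t <= sum_to f n.
Proof.
  induction n as [|n IH]; simpl; intros Ht; [lia|].
  destruct (Nat.eq_dec t (S n)) as [->|]; [lia|].
  pose proof (IH ltac:(lia)). lia.
Qed.

Lemma sum_to_indicator (X n : nat) :
  sum_to (fun m => if m <=? X then 1 else 0) n = Nat.min X n.
Proof.
  induction n as [|n IH]; cbn [sum_to]; [now rewrite Nat.min_0_r|].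
  rewrite IH. destruct (Nat.leb_spec (S n) X); lia.
Qed.

Lemma sum_to_point_le (f : nat -> nat) (x n : nat) :
  sum_to (fun m => f m * (if x =? m then 1 else 0)) n <= f x.
Proof.
  induction n as [|n IH]; simpl; [lia|].
  destruct (Nat.eqb_spec x (S n)) as [->|]; [|lia].
  assert (Hzero : sum_to (fun m => f m * (if S n =? m then 1 else 0)) n = 0).
  { apply Nat.le_0_r. transitivity (sum_to (fun _ => 0) n).
    - apply sum_to_le. intros m Hm. destruct (Nat.eqb_spec (S n) m); lia.
    - rewrite sum_to_const. lia. }
  lia.
Qed.

Lemma cover_weight_le (w i j : nat -> nat) (n M : nat) :
  (forall m, 1 <= m <= M -> exists t, 1 <= t <= n /\ (i t = m \/ j t = m)) ->
  sum_to w M <= sum_to (fun t => w (i t) + w (j t)) n.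
Proof.
  intros Hcover.
  set (hits := fun m t => (if i t =? m then 1 else 0) + (if j t =? m then 1 else 0)).
  transitivity (sum_to (fun m => sum_to (fun t => w m * hits m t) n) M).
  - apply sum_to_le. intros m Hm.
    destruct (Hcover m Hm) as (t & Ht & Hit).
    transitivity (w m * hits m t).
    + assert (1 <= hits m t).
      { unfold hits. destruct Hit as [-> | ->]; rewrite Nat.eqb_refl; lia. }
      nia.
    + apply (sum_to_term_le (fun t => w m * hits m t)); exact Ht.
  - rewrite sum_to_swap. apply sum_to_le. intros t _.
    pose proof (sum_to_point_le w (i t) M) as Hi.
    pose proof (sum_to_point_le w (j t) M) as Hj.
    etransitivity; [|apply Nat.add_le_mono; eassumption].
    rewrite <- sum_to_add. apply sum_to_le. intros m _. unfold hits. lia.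
Qed.

Lemma heavy_pair_exists (w i j : nat -> nat) (n M c : nat) :
  (forall m, 1 <= m <= M -> exists t, 1 <= t <= n /\ (i t = m \/ j t = m)) ->
  c * n < sum_to w M ->
  exists t, 1 <= t <= n /\ c < w (i t) + w (j t).
Proof.
  intros Hcover Hbig. apply NNPP. intros Hnone.
  assert (Hlight : sum_to (fun t => w (i t) + w (j t)) n <= sum_to (fun _ => c) n).
  { apply sum_to_le. intros t Ht.
    apply Nat.nlt_ge. intros Hc. apply Hnone. exists t. auto. }
  pose proof (cover_weight_le w i j n M Hcover).
  rewrite sum_to_const in Hlight. lia.
Qed.

Section SortedSemigroup.

Variables (G : Type) (op : G -> G -> G) (le : G -> G -> Prop).
Hypothesis HG : TOCS G op le.

Lemma sorted_le (a : nat -> G) (M : nat) :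
  (forall k, 1 <= k -> k < M -> le (a k) (a (S k))) ->
  forall p q, 1 <= p <= q -> q <= M -> le (a p) (a q).
Proof.
  destruct HG as (_ & _ & Hrefl & _ & Htrans & _).
  intros Hsorted p q Hpq HqM.
  induction q as [|q IH]; [lia|].
  destruct (Nat.eq_dec p (S q)) as [->|]; [apply Hrefl|].
  apply Htrans with (a q); [apply IH; lia | apply Hsorted; lia].
Qed.

Lemma gt_le_trans (x y N : G) : gt le x N -> le x y -> gt le y N.
Proof.
  destruct HG as (_ & _ & _ & Hanti & Htrans & _).
  intros [HNx Hne] Hxy. split.
  - exact (Htrans _ _ _ HNx Hxy).
  - intros ->. apply Hne. apply Hanti; assumption.
Qed.

Lemma sorted_product_le (a : nat -> G) (M : nat) :
  (forall k, 1 <= k -> k < M -> le (a k) (a (S k))) ->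
  forall x y p q, 1 <= x -> 1 <= y -> x <= q -> y <= q -> p <= q <= M ->
    (x <= p \/ y <= p) -> le (op (a x) (a y)) (op (a p) (a q)).
Proof.
  intros Hsorted x y p q Hx Hy Hxq Hyq Hpq Hp.
  destruct HG as (_ & Hcomm & _ & _ & _ & _ & Hmono).
  pose proof (sorted_le a M Hsorted) as Hle.
  destruct Hp as [Hxp | Hyp].
  - apply Hmono; apply Hle; lia.
  - rewrite Hcomm. apply Hmono; apply Hle; lia.
Qed.

End SortedSemigroup.

Theorem theorem2p5 (G : Type) (op : G -> G -> G) (le : G -> G -> Prop)
  (HG : TOCS G op le) (n : nat) (Hn : 1 <= n) (a : nat -> G)
  (Hsorted : forall k, 1 <= k -> k < 2 * n -> le (a k) (a (S k)))
  (N : G) (i j : nat -> nat)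
  (Hrange : forall k, 1 <= k <= n ->
     (1 <= i k <= 2 * n) /\ (1 <= j k <= 2 * n))
  (Hcover : forall m, 1 <= m <= 2 * n ->
     exists k, 1 <= k <= n /\ (i k = m \/ j k = m))
  (Hpairs : forall k, 1 <= k <= n -> gt le (op (a (i k)) (a (j k))) N) :
  forall k, 1 <= k <= n -> gt le (op (a k) (a (2 * n + 1 - k))) N.
Proof.
  intros k Hk.
  set (X := 2 * n + 1 - k).
  set (w := fun m => (if m <=? X then 1 else 0) + (if m <=? k then 1 else 0)).
  assert (Htotal : sum_to w (2 * n) = 2 * n + 1).
  { unfold w. rewrite sum_to_add, !sum_to_indicator. unfold X. lia. }
  destruct (heavy_pair_exists w i j n (2 * n) 2 Hcover ltac:(lia))
    as (t & Ht & Hheavy).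
  destruct (Hrange t Ht) as [Hi Hj].
  assert (Hpos : i t <= X /\ j t <= X /\ (i t <= k \/ j t <= k)).
  { unfold w in Hheavy.
    destruct (Nat.leb_spec (i t) X), (Nat.leb_spec (i t) k),
             (Nat.leb_spec (j t) X), (Nat.leb_spec (j t) k); lia. }
  destruct Hpos as (HiX & HjX & Hik).
  apply (gt_le_trans G op le HG (op (a (i t)) (a (j t)))); [exact (Hpairs t Ht)|].
  apply (sorted_product_le G op le HG a (2 * n) Hsorted); unfold X in *; lia.
Qed.
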